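(* Let $d,k,m$ be positive integers with $m>\max\{d,k\}$, let $\mathbf W\in\mathbb R^{k\times m}$ and $\mathbf V\in\mathbb R^{m\times d}$ with $\sigma_{\min}(\mathbf W)>0$ and $\sigma_{\min}(\mathbf V)>0$, and let $\boldsymbol\Sigma\in\mathbb R^{d\times d}$ be symmetric positive definite. Define $$\widehat{\mathbf G}_O=\mathbf W\mathbf W^\top\otimes\boldsymbol\Sigma+\mathbf I_k\otimes\boldsymbol\Sigma^{1/2}\mathbf V^\top\mathbf V\boldsymbol\Sigma^{1/2}\in\mathbb R^{kd\times kd}.$$ Then $\widehat{\mathbf G}_O$ is positive definite and, with $\beta_w=\sigma_{\min}^2(\mathbf W)/(\sigma_{\min}^2(\mathbf W)+\sigma_{\min}^2(\mathbf V))$, $$\kappa(\widehat{\mathbf G}_O)\le\kappa(\boldsymbol\Sigma)\cdot\frac{\sigma_{\max}^2(\mathbf W)+\sigma_{\max}^2(\mathbf V)}{\sigma_{\min}^2(\mathbf W)+\sigma_{\min}^2(\mathbf V)}=\kappa(\boldsymbol\Sigma)\big(\beta_w\,\kappa(\mathbf W)^2+(1-\beta_w)\,\kappa(\mathbf V)^2\big).$$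
   Context: $\boldsymbol\Sigma$ plays the role of the empirical input covariance $\frac1n\sum_i \mathbf x_i\mathbf x_i^\top$, and $\widehat{\mathbf G}_O$ is a matrix having the same nonzero eigenvalues as the Gauss–Newton matrix of the network $F(\mathbf x)=\mathbf W\mathbf V\mathbf x$. $\boldsymbol\Sigma^{1/2}$ is the unique positive semidefinite square root; $\otimes$ is the Kronecker product. For a symmetric positive definite matrix $\mathbf A$, $\kappa(\mathbf A)=\lambda_{\max}(\mathbf A)/\lambda_{\min}(\mathbf A)$. For a rectangular matrix $\mathbf A\in\mathbb R^{p\times q}$, $\sigma_{\max}(\mathbf A)$ is its largest singular value, $\sigma_{\min}(\mathbf A)$ is its $\min(p,q)$-th largest singular value, and $\kappa(\mathbf A)=\sigma_{\max}(\mathbf A)/\sigma_{\min}(\mathbf A)$. *)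

From mathcomp Require Import all_boot all_order all_algebra.
From mathcomp Require Import polyrcf mxtens.
Set Implicit Arguments. Unset Strict Implicit. Unset Printing Implicit Defensive.
Import Order.TTheory GRing.Theory Num.Theory.
Local Open Scope ring_scope.

Section Defs.
Variable R : rcfType.

Definition posdef n (A : 'M[R]_n) : Prop :=
  A^T = A /\ forall x : 'cV[R]_n, x != 0 -> 0 < (x^T *m A *m x) 0 0.

Definition psd n (A : 'M[R]_n) : Prop :=
  A^T = A /\ forall x : 'cV[R]_n, 0 <= (x^T *m A *m x) 0 0.

(* the (real) eigenvalues of A are the real roots of its characteristic
   polynomial; rootsR lists them in increasing order (without repetition). *)
Definition eigs n (A : 'M[R]_n) : seq R := rootsR (char_poly A).
Definition lambda_max n (A : 'M[R]_n) : R := last 0 (eigs A).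
Definition lambda_min n (A : 'M[R]_n) : R := head 0 (eigs A).

Definition kappa_sym n (A : 'M[R]_n) : R := lambda_max A / lambda_min A.

(* singular values of A : 'M_(p,q): the squares of the min(p,q) largest
   singular values are the eigenvalues of the min(p,q) x min(p,q) Gram matrix *)
Definition sigma_max p q (A : 'M[R]_(p, q)) : R :=
  Num.sqrt (lambda_max (A^T *m A)).
Definition sigma_min p q (A : 'M[R]_(p, q)) : R :=
  if (p <= q)%N then Num.sqrt (lambda_min (A *m A^T))
  else Num.sqrt (lambda_min (A^T *m A)).
Definition kappa_rect p q (A : 'M[R]_(p, q)) : R := sigma_max A / sigma_min A.

End Defs.

(* Reading x in R^(k*d) as a k x d matrix X, the quadratic form of G is
   tr(X^T (W W^T) X Sigma) + tr(Z (V^T V) Z^T) with Z = X Sigma^(1/2).  Rayleigh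
   bounds, applied once to each factor of each trace, squeeze it between
   lambda_min(Sigma) (sigma_min(W)^2 + sigma_min(V)^2) |x|^2 and
   lambda_max(Sigma) (sigma_max(W)^2 + sigma_max(V)^2) |x|^2; for the upper bound one
   uses that W W^T and W^T W share their nonzero eigenvalues.  Evaluating the form at
   eigenvectors puts the extreme eigenvalues of G in the same interval.  The Rayleigh
   bounds for a real symmetric matrix come from the spectral theorem for its
   complexification. *)

From mathcomp Require Import all_boot all_order all_algebra.
From mathcomp Require Import polyrcf mxtens complex.
From mathcomp Require Import ring lra.
Set Implicit Arguments. Unset Strict Implicit. Unset Printing Implicit Defensive.
Import Order.TTheory GRing.Theory Num.Theory.
Local Open Scope ring_scope.

Lemma sorted_head_le d (T : porderType d) (x0 x : T) s :
  sorted <%O s -> x \in s -> (head x0 s <= x)%O.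
Proof.
case: s => [//|a s] /= /(order_path_min lt_trans) /allP a_lt.
by rewrite inE => /predU1P[->//|/a_lt/ltW].
Qed.

Lemma sorted_le_last d (T : porderType d) (x0 x : T) s :
  sorted <%O s -> x \in s -> (x <= last x0 s)%O.
Proof.
case: s => [//|a s] /=; elim: s a x => [|b s IHs] a x /=.
  by rewrite inE => _ /eqP->.
move=> /andP[ab bs]; rewrite inE => /predU1P[->|]; last exact: IHs.
exact: le_trans (ltW ab) (IHs b b bs (mem_head b s)).
Qed.

Lemma eigenvalue_mulC (F : fieldType) p q (A : 'M[F]_(p, q)) (B : 'M[F]_(q, p)) a :
  a != 0 -> eigenvalue (A *m B) a -> eigenvalue (B *m A) a.
Proof.
move=> a_neq0 /eigenvalueP[v vAB v_neq0]; apply/eigenvalueP; exists (v *m A).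
  by rewrite mulmxA -(mulmxA v) vAB -scalemxAl.
apply: contraNneq v_neq0 => vA0; move: vAB; rewrite mulmxA vA0 mul0mx => /esym/eqP.
by rewrite scaler_eq0 (negPf a_neq0).
Qed.

Section Eigenvalues.
Variables (R : rcfType) (n : nat) (B : 'M[R]_n).

Lemma mem_eigs r : (r \in eigs B) = eigenvalue B r.
Proof.
have cB_neq0 : char_poly B != 0 by rewrite monic_neq0 // char_poly_monic.
by rewrite /eigs -(roots_on_rootsR cB_neq0) in_itv /= eigenvalue_root_char.
Qed.

Lemma eigenvalue_bounds r : eigenvalue B r -> lambda_min B <= r <= lambda_max B.
Proof.
rewrite -mem_eigs => r_eig; have sB : sorted <%R (eigs B) := sorted_roots _ _ _.
by rewrite (sorted_head_le _ sB r_eig) (sorted_le_last _ sB r_eig).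
Qed.

Lemma lambda_min_le_max : lambda_min B <= lambda_max B.
Proof.
have : sorted <%R (eigs B) := sorted_roots _ _ _.
rewrite /lambda_min /lambda_max; case: (eigs B) => // a s sB.
exact: (sorted_le_last 0 sB (mem_head a s)).
Qed.

Lemma eigenvalue_lambda_min_max : eigs B != [::] ->
  eigenvalue B (lambda_min B) /\ eigenvalue B (lambda_max B).
Proof.
rewrite /lambda_min /lambda_max -!mem_eigs; case: (eigs B) => //= a s _.
by rewrite mem_head mem_last.
Qed.

End Eigenvalues.

Section SymmetricSpectral.
Variables (R : rcfType) (n : nat) (B : 'M[R]_n).
Hypothesis symB : B^T = B.
Local Notation toC := (real_complex R).

Let Bc := map_mx toC B.
Let P := spectralmx Bc.
Let D := spectral_diag Bc.

Let hermsym_Bc : Bc \is hermsymmx.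
Proof.
apply: realsym_hermsym.
  by apply/is_hermitianmxP; rewrite expr0 scale1r map_mx_id // /Bc map_trmx symB.
by apply/mxOverP => i j; rewrite mxE; apply/complex_realP; exists (B i j).
Qed.

Let Bc_spectral : Bc = invmx P *m diag_mx D *m P.
Proof. exact/orthomx_spectralP/hermitian_normalmx/hermsym_Bc. Qed.

Let unit_P : P \in unitmx. Proof. exact: spectral_unit. Qed.

Lemma spectral_diag_eigenvalue i : exists2 r, D 0 i = toC r & eigenvalue B r.
Proof.
have /complex_realP[r Dr] : D 0 i \is Num.real.
  exact: mxOverP (hermitian_spectral_diag_real hermsym_Bc) 0 i.
exists r => //.
have <- : eigenvalue Bc (D 0 i) = eigenvalue B r by rewrite Dr eigenvalue_map.
apply/eigenvalueP; exists (row i P).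
  rewrite Bc_spectral !mulmxA -row_mul mulmxV // row1 -rowE row_diag_mx.
  by rewrite -scalemxAl -rowE.
apply/negP => /eqP Pi0; have := congr1 (mulmx^~ (invmx P)) Pi0.
rewrite -row_mul mulmxV // mul0mx row1 => /matrixP/(_ 0 i).
by rewrite !mxE !eqxx /= => /eqP; rewrite oner_eq0.
Qed.

Lemma symmetric_eigenvalue_exists : (0 < n)%N -> exists r, eigenvalue B r.
Proof.
by move=> n_gt0; have [r _ ?] := spectral_diag_eigenvalue (Ordinal n_gt0); exists r.
Qed.

Lemma rayleigh_bounds (u : 'rV[R]_n) :
  lambda_min B * (u *m u^T) 0 0 <= (u *m B *m u^T) 0 0 <= lambda_max B * (u *m u^T) 0 0.
Proof.
(* In the coordinates [y] of [u] in the unitary eigenbasis, both forms are sums of the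
   [|y_j|^2], weighted by the eigenvalues [D_j] and by [1] respectively. *)
pose uc := map_mx toC u; pose y := uc *m invmx P.
have conj_toC (r : R) : (toC r)^* = toC r by apply/CrealP/complex_realP; exists r.
have Puc : P *m uc^T = map_mx Num.conj y^T.
  rewrite /y trmx_mul map_mxM invmx_unitary ?spectral_unitarymx // map_trmx.
  rewrite trmxCK; congr (_ *m _); apply/matrixP => i j.
  by rewrite !mxE; exact/esym/conj_toC.
have diag_qformE (E : 'rV_n) : (y *m diag_mx E *m map_mx Num.conj y^T) 0 0
    = \sum_j E 0 j * (y 0 j * (y 0 j)^*).
  by rewrite mxE; apply: eq_bigr => l _; rewrite mul_mx_diag !mxE mulrCA mulrA.
have normE : toC ((u *m u^T) 0 0) = \sum_j y 0 j * (y 0 j)^*.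
  transitivity ((map_mx toC (u *m u^T)) 0 0); first by rewrite [RHS]mxE.
  rewrite map_mxM -map_trmx -/uc -[uc in uc *m _](mulmxKV unit_P) -(mulmxA _ P) Puc.
  rewrite -[y in y *m _]mulmx1 -diag_const_mx diag_qformE.
  by under eq_bigr do rewrite mxE mul1r.
have qformE : toC ((u *m B *m u^T) 0 0) = \sum_j D 0 j * (y 0 j * (y 0 j)^*).
  transitivity ((map_mx toC (u *m B *m u^T)) 0 0); first by rewrite [RHS]mxE.
  rewrite !map_mxM -map_trmx -/uc.
  rewrite (_ : map_mx _ B = Bc) // Bc_spectral !mulmxA -/y -mulmxA Puc.
  exact: diag_qformE.
rewrite -!lecR !rmorphM /= qformE normE !mulr_sumr.
apply/andP; split; apply: ler_sum => j _;
  have [r -> /eigenvalue_bounds/andP[lo hi]] := spectral_diag_eigenvalue j;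
  by apply: ler_wpM2r; rewrite ?mul_conjC_ge0 ?lecR.
Qed.

End SymmetricSpectral.

Section TensorQuadraticForm.
Variable R : comPzRingType.

Definition vec_mxtens k d (x : 'cV[R]_(k * d)) : 'M[R]_(k, d) :=
  \matrix_(i, j) x (mxtens_index (i, j)) 0.

Lemma big_mxtens_index k d (F : 'I_(k * d) -> R) :
  \sum_a F a = \sum_(i < k) \sum_(j < d) F (mxtens_index (i, j)).
Proof.
rewrite pair_big /= (reindex (@mxtens_index k d)) /=; first by apply: eq_bigr => -[].
by exists (@mxtens_unindex k d) => a _; rewrite (mxtens_indexK, mxtens_unindexK).
Qed.

Lemma qform_sum N (T : 'M[R]_N) (x : 'cV[R]_N) :
  (x^T *m T *m x) 0 0 = \sum_a \sum_b x a 0 * T a b * x b 0.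
Proof.
rewrite mxE; under eq_bigr => b _ do rewrite mxE mulr_suml.
rewrite exchange_big; apply: eq_bigr => a _; apply: eq_bigr => b _.
by rewrite !mxE.
Qed.

Lemma qform_tensmx k d (A : 'M[R]_k) (B : 'M[R]_d) (x : 'cV[R]_(k * d)) :
  (x^T *m (A *t B) *m x) 0 0
  = \tr ((vec_mxtens x)^T *m A *m vec_mxtens x *m B^T).
Proof.
set X := vec_mxtens x.
transitivity (\sum_(i1 < k) \sum_(i2 < d) \sum_(j1 < k) \sum_(j2 < d)
   X i1 i2 * A i1 j1 * X j1 j2 * B i2 j2).
  rewrite qform_sum big_mxtens_index; apply: eq_bigr => i1 _; apply: eq_bigr => i2 _.
  rewrite big_mxtens_index; apply: eq_bigr => j1 _; apply: eq_bigr => j2 _.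
  by rewrite tensmxE !mxE; ring.
symmetry; transitivity (\sum_(i2 < d) \sum_(j2 < d) \sum_(j1 < k) \sum_(i1 < k)
   X i1 i2 * A i1 j1 * X j1 j2 * B i2 j2).
  rewrite /mxtrace; apply: eq_bigr => i2 _; rewrite mxE; apply: eq_bigr => j2 _.
  rewrite mxE mulr_suml; apply: eq_bigr => j1 _; rewrite mxE !mulr_suml.
  by apply: eq_bigr => i1 _; rewrite !mxE.
under eq_bigr => i2 _ do under eq_bigr => j2 _ do rewrite exchange_big.
under eq_bigr => i2 _ do rewrite exchange_big.
rewrite exchange_big.
by under eq_bigr => i1 _ do under eq_bigr => i2 _ do rewrite exchange_big.
Qed.

Lemma sqnorm_vec_mxtens k d (x : 'cV[R]_(k * d)) :
  (x^T *m x) 0 0 = \tr (vec_mxtens x *m (vec_mxtens x)^T).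
Proof.
rewrite mxE big_mxtens_index /mxtrace; apply: eq_bigr => i _; rewrite mxE.
by apply: eq_bigr => j _; rewrite !mxE.
Qed.

End TensorQuadraticForm.

Section QuadraticFormBounds.
Variable R : rcfType.

Lemma sqnorm_gt0 N (x : 'cV[R]_N) : x != 0 -> 0 < (x^T *m x) 0 0.
Proof.
move=> x_neq0; have sq_ge0 (a : 'I_N) : 0 <= x^T 0 a * x a 0.
  by rewrite mxE -expr2 sqr_ge0.
rewrite mxE lt_def sumr_ge0 ?andbT //; apply: contraNneq x_neq0 => /eqP.
rewrite psumr_eq0 // => /allP x0; apply/eqP/matrixP => a j; rewrite [j]ord1 mxE.
by have := x0 a (mem_index_enum a); rewrite mxE -expr2 sqrf_eq0 => /eqP.
Qed.

Lemma mxtrace_gram_ge0 p q (M : 'M[R]_(p, q)) : 0 <= \tr (M *m M^T).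
Proof.
rewrite /mxtrace sumr_ge0 // => i _; rewrite mxE sumr_ge0 // => j _.
by rewrite !mxE -expr2 sqr_ge0.
Qed.

Lemma mxtrace_qform_bounds p n (B : 'M[R]_n) (M : 'M[R]_(p, n)) : B^T = B ->
  lambda_min B * \tr (M *m M^T) <= \tr (M *m B *m M^T) <= lambda_max B * \tr (M *m M^T).
Proof.
have row_qform (C : 'M[R]_n) i :
    (M *m C *m M^T) i i = (row i M *m C *m (row i M)^T) 0 0.
  rewrite !mxE; apply: eq_bigr => j _; rewrite !mxE; congr (_ * _).
  by apply: eq_bigr => l _; rewrite !mxE.
have row_sqnorm i : (M *m M^T) i i = (row i M *m (row i M)^T) 0 0.
  by have := row_qform 1%:M i; rewrite !mulmx1.
move=> symB; rewrite /mxtrace !mulr_sumr; apply/andP; split; apply: ler_sum => i _;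
  by have /andP[] := rayleigh_bounds symB (row i M); rewrite row_qform row_sqnorm.
Qed.

Lemma eigenvalue_qform n (B : 'M[R]_n) r : eigenvalue B r ->
  exists2 x : 'cV_n, 0 < (x^T *m x) 0 0 & (x^T *m B *m x) 0 0 = r * (x^T *m x) 0 0.
Proof.
move=> /eigenvalueP[v vB v_neq0]; exists v^T; last by rewrite trmxK vB -scalemxAl mxE.
by apply: sqnorm_gt0; rewrite trmx_eq0.
Qed.

Lemma eigenvalue_qform_bounds n (B : 'M[R]_n) c C r :
  (forall x : 'cV_n, c * (x^T *m x) 0 0 <= (x^T *m B *m x) 0 0 <= C * (x^T *m x) 0 0) ->
  eigenvalue B r -> c <= r <= C.
Proof.
move=> qB /eigenvalue_qform[x x_gt0 qx]; have := qB x.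
by rewrite qx !ler_pM2r.
Qed.

Lemma eigs_neq0 n (B : 'M[R]_n) : (0 < n)%N -> B^T = B -> eigs B != [::].
Proof.
move=> n_gt0 symB; have [r] := symmetric_eigenvalue_exists symB n_gt0.
by rewrite -mem_eigs; case: (eigs B).
Qed.

Lemma posdef_lambda_min_gt0 n (B : 'M[R]_n) : (0 < n)%N -> posdef B -> 0 < lambda_min B.
Proof.
move=> n_gt0 [symB pdB]; have [+ _] := eigenvalue_lambda_min_max (eigs_neq0 n_gt0 symB).
move=> /eigenvalue_qform[x x_gt0 qx]; have := pdB x; rewrite qx pmulr_lgt0 //; apply.
by apply: contraTneq x_gt0 => ->; rewrite trmx0 mul0mx mxE ltxx.
Qed.

Lemma posdef_kappa_sym_le n (B : 'M[R]_n) c C : (0 < n)%N -> B^T = B -> 0 < c ->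
  (forall x : 'cV_n, c * (x^T *m x) 0 0 <= (x^T *m B *m x) 0 0 <= C * (x^T *m x) 0 0) ->
  posdef B /\ kappa_sym B <= C / c.
Proof.
move=> n_gt0 symB c_gt0 qB.
have [min_eig max_eig] := eigenvalue_lambda_min_max (eigs_neq0 n_gt0 symB).
have /andP[c_le _] := eigenvalue_qform_bounds qB min_eig.
have /andP[_ le_C] := eigenvalue_qform_bounds qB max_eig.
split.
  split=> // x x_neq0; have /andP[+ _] := qB x; apply: lt_le_trans.
  by rewrite mulr_gt0 // sqnorm_gt0.
have lmin_gt0 : 0 < lambda_min B := lt_le_trans c_gt0 c_le.
have C_ge0 : 0 <= C.
  by apply: le_trans le_C; apply: le_trans (lambda_min_le_max B); exact: ltW.
rewrite /kappa_sym; apply: (@le_trans _ _ (C / lambda_min B)).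
  by rewrite ler_pM2r ?invr_gt0.
by rewrite ler_wpM2l // lef_pV2 ?posrE.
Qed.

End QuadraticFormBounds.

Section Gram.
Variable R : rcfType.

Lemma lambda_min_gram_ge0 p q (M : 'M[R]_(p, q)) : 0 <= lambda_min (M *m M^T).
Proof.
have [eigs0|eigs_neq0] := eqVneq (eigs (M *m M^T)) [::].
  by rewrite /lambda_min eigs0.
have [/eigenvalue_qform[x x_gt0 qx] _] := eigenvalue_lambda_min_max eigs_neq0.
rewrite -(pmulr_lge0 _ x_gt0) -qx !mulmxA -[x^T *m M]trmxK trmx_mul trmxK -mulmxA.
by rewrite mxE sumr_ge0 // => i _; rewrite [X in X * _]mxE -expr2 sqr_ge0.
Qed.

Lemma lambda_max_gram_le_trmx p q (M : 'M[R]_(p, q)) :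
  lambda_max (M *m M^T) <= lambda_max (M^T *m M).
Proof.
have max_ge0 : 0 <= lambda_max (M^T *m M).
  apply: le_trans (lambda_min_le_max _); rewrite -{2}(trmxK M); exact: lambda_min_gram_ge0.
have [eigs0|eigs_neq0] := eqVneq (eigs (M *m M^T)) [::].
  by rewrite /lambda_max eigs0.
have [lmax0|lmax_neq0] := eqVneq (lambda_max (M *m M^T)) 0; first by rewrite lmax0.
have [_ max_eig] := eigenvalue_lambda_min_max eigs_neq0.
by have /andP[] := eigenvalue_bounds (eigenvalue_mulC lmax_neq0 max_eig).
Qed.

Lemma sqr_sigma_max p q (A : 'M[R]_(p, q)) : sigma_max A ^+ 2 = lambda_max (A^T *m A).
Proof.
rewrite sqr_sqrtr //; apply: le_trans (lambda_min_le_max _).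
by rewrite -{2}(trmxK A); exact: lambda_min_gram_ge0.
Qed.

Lemma sqr_sigma_min_le p q (A : 'M[R]_(p, q)) : (p <= q)%N ->
  sigma_min A ^+ 2 = lambda_min (A *m A^T).
Proof. by move=> le_pq; rewrite /sigma_min le_pq sqr_sqrtr ?lambda_min_gram_ge0. Qed.

Lemma sqr_sigma_min_gt p q (A : 'M[R]_(p, q)) : (q < p)%N ->
  sigma_min A ^+ 2 = lambda_min (A^T *m A).
Proof.
move=> lt_qp; rewrite /sigma_min leqNgt lt_qp sqr_sqrtr //.
by rewrite -{2}(trmxK A); exact: lambda_min_gram_ge0.
Qed.

End Gram.

Section GaussNewtonQuadraticForm.
Variables (R : rcfType) (k d m : nat).
Variables (W : 'M[R]_(k, m)) (V : 'M[R]_(m, d)) (Sigma S : 'M[R]_d).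
Hypotheses (symSigma : Sigma^T = Sigma) (symS : S^T = S) (sqrt_Sigma : S *m S = Sigma).
Hypothesis lambda_min_Sigma_ge0 : 0 <= lambda_min Sigma.

Definition gauss_newton_mx : 'M[R]_(k * d) :=
  (W *m W^T) *t Sigma + 1%:M *t (S *m V^T *m V *m S).

Lemma trmx_gauss_newton_mx : gauss_newton_mx^T = gauss_newton_mx.
Proof.
rewrite /gauss_newton_mx linearD /= !trmx_tens !trmx_mul !trmxK.
by rewrite symSigma trmx1 symS !mulmxA.
Qed.

Lemma gauss_newton_qform_bounds (x : 'cV[R]_(k * d)) :
  lambda_min Sigma * (lambda_min (W *m W^T) + lambda_min (V^T *m V)) * (x^T *m x) 0 0
    <= (x^T *m gauss_newton_mx *m x) 0 0
    <= lambda_max Sigma * (lambda_max (W^T *m W) + lambda_max (V^T *m V)) * (x^T *m x) 0 0.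
Proof.
set X := vec_mxtens x; set Y := W^T *m X; set Z := X *m S.
have qGE : (x^T *m gauss_newton_mx *m x) 0 0
    = \tr (Y *m Sigma *m Y^T) + \tr (Z *m (V^T *m V) *m Z^T).
  rewrite /gauss_newton_mx mulmxDr mulmxDl mxE !qform_tensmx -/X; congr (_ + _).
    by rewrite symSigma /Y trmx_mul trmxK (mxtrace_mulC (W^T *m X *m Sigma)) !mulmxA.
  by rewrite /Z mulmx1 !trmx_mul !trmxK symS !mulmxA [RHS]mxtrace_mulC !mulmxA.
have sqnormE : (x^T *m x) 0 0 = \tr (X *m X^T) := sqnorm_vec_mxtens x.
have trYE : \tr (Y *m Y^T) = \tr (X^T *m (W *m W^T) *m X^T^T).
  by rewrite trmxK /Y trmx_mul trmxK mxtrace_mulC !mulmxA.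
have trZE : \tr (Z *m Z^T) = \tr (X *m Sigma *m X^T).
  by rewrite /Z trmx_mul symS -sqrt_Sigma !mulmxA.
have symWW : (W *m W^T)^T = W *m W^T by rewrite trmx_mul trmxK.
have symVV : (V^T *m V)^T = V^T *m V by rewrite trmx_mul trmxK.
have /andP[Y_lo Y_hi] := mxtrace_qform_bounds Y symSigma.
have /andP[Z_lo Z_hi] := mxtrace_qform_bounds Z symVV.
have /andP[X_lo X_hi] := mxtrace_qform_bounds X^T symWW.
have /andP[XS_lo XS_hi] := mxtrace_qform_bounds X symSigma.
rewrite -trYE trmxK mxtrace_mulC in X_lo X_hi; rewrite -trZE in XS_lo XS_hi.
have VV_ge0 : 0 <= lambda_min (V^T *m V) by rewrite -{2}(trmxK V); exact: lambda_min_gram_ge0.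
have maxSigma_ge0 := le_trans lambda_min_Sigma_ge0 (lambda_min_le_max Sigma).
have maxVV_ge0 := le_trans VV_ge0 (lambda_min_le_max (V^T *m V)).
have WW_le := lambda_max_gram_le_trmx W.
have trX_ge0 := mxtrace_gram_ge0 X.
rewrite qGE sqnormE; apply/andP; split.
- have := ler_wpM2l lambda_min_Sigma_ge0 X_lo; have := ler_wpM2l VV_ge0 XS_lo; nra.
- have := ler_wpM2l maxSigma_ge0 X_hi; have := ler_wpM2l maxVV_ge0 XS_hi.
  have := ler_wpM2l maxSigma_ge0 (ler_wpM2r trX_ge0 WW_le); nra.
Qed.

End GaussNewtonQuadraticForm.

Unset Implicit Arguments.

Theorem mainTheorem1 (R : rcfType) (d k m : nat)
  (W : 'M[R]_(k, m)) (V : 'M[R]_(m, d)) (Sigma Sigma_half : 'M[R]_d) :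
  (0 < d)%N -> (0 < k)%N -> (0 < m)%N -> (maxn d k < m)%N ->
  0 < sigma_min W -> 0 < sigma_min V ->
  posdef Sigma ->
  psd Sigma_half -> Sigma_half *m Sigma_half = Sigma ->
  let G := (W *m W^T) *t Sigma
           + (1%:M : 'M[R]_k) *t (Sigma_half *m V^T *m V *m Sigma_half) in
  let beta_w := sigma_min W ^+ 2 / (sigma_min W ^+ 2 + sigma_min V ^+ 2) in
  posdef G /\
  kappa_sym G <= kappa_sym Sigma *
     ((sigma_max W ^+ 2 + sigma_max V ^+ 2) / (sigma_min W ^+ 2 + sigma_min V ^+ 2)) /\
  kappa_sym Sigma *
     ((sigma_max W ^+ 2 + sigma_max V ^+ 2) / (sigma_min W ^+ 2 + sigma_min V ^+ 2))
  = kappa_sym Sigma *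
     (beta_w * kappa_rect W ^+ 2 + (1 - beta_w) * kappa_rect V ^+ 2).
Proof.
move=> d_gt0 k_gt0 _ m_gt_dk sminW_gt0 sminV_gt0 pdSigma [symS _] sqrt_Sigma G beta_w.
have [symSigma _] := pdSigma.
have [m_gt_d m_gt_k] : (d < m)%N /\ (k < m)%N by move: m_gt_dk; rewrite gtn_max => /andP.
have lSigma_gt0 := posdef_lambda_min_gt0 d_gt0 pdSigma.
have sminW2 := sqr_sigma_min_le W (ltnW m_gt_k).
have sminV2 := sqr_sigma_min_gt V m_gt_d.
have sigma2_gt0 : 0 < sigma_min W ^+ 2 + sigma_min V ^+ 2 by rewrite addr_gt0 ?exprn_gt0.
have kd_gt0 : (0 < k * d)%N by rewrite muln_gt0 k_gt0.
have c_gt0 : 0 < lambda_min Sigma * (lambda_min (W *m W^T) + lambda_min (V^T *m V)).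
  by rewrite -sminW2 -sminV2 mulr_gt0.
have [pdG kappaG] := posdef_kappa_sym_le kd_gt0 (trmx_gauss_newton_mx W V symSigma symS)
  c_gt0 (gauss_newton_qform_bounds W V symSigma symS sqrt_Sigma (ltW lSigma_gt0)).
have boundE : kappa_sym Sigma *
    ((sigma_max W ^+ 2 + sigma_max V ^+ 2) / (sigma_min W ^+ 2 + sigma_min V ^+ 2))
  = lambda_max Sigma * (lambda_max (W^T *m W) + lambda_max (V^T *m V))
    / (lambda_min Sigma * (lambda_min (W *m W^T) + lambda_min (V^T *m V))).
  rewrite !sqr_sigma_max -sminW2 -sminV2 /kappa_sym.
  by field; rewrite !gt_eqF.
split; [exact: pdG | split; first by rewrite boundE].
rewrite /beta_w /kappa_rect; congr (_ * _).
by field; rewrite !gt_eqF ?exprn_gt0.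
Qed.
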